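(* Let $(G,\cdot)$ be a semigroup, $(G,\curlywedge)$ a semilattice on the same set $G$, and $\xi,\delta\subseteq G\times G$ binary relations. Then the algebraic system $(G,\cdot,\curlywedge,\xi,\delta)$ is isomorphic to some transformative $\cap$-semigroup of transformations $(\Phi,\cdot,\cap,\xi_\Phi,\delta_\Phi)$ if and only if all of the following hold: (1) $\xi$ is left regular (i.e. $(u,v)\in\xi\Rightarrow(xu,xv)\in\xi$ for all $x,u,v\in G$) and contains the semilattice order $\zeta$; (2) $\delta$ is a left ideal of $(G,\cdot)$ (i.e. $(x,y)\in\delta\Rightarrow(ux,y)\in\delta$ for all $x,y,u\in G$); (3) for all $x,y,z,u,v\in G$: $x(y\curlywedge z)=xy\curlywedge xz$; \ $x\leqslant y\wedge u\leqslant v\wedge y\downarrow v\Rightarrow u\downarrow x$; \ $x\downarrow y\Rightarrow (x\curlywedge y)u=xu\curlywedge yu$; (4) for all $x,y\in G$: $x\curlywedge y\in f_\xi(\{x\})\Rightarrow x\leqslant y$; \ $x\curlywedge y\in f_\xi(\{x,y\})\Rightarrow x\downarrow y$; \ $xy\in f_\xi(\{x\})\Rightarrow x\vdash y$.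
   Context: Notation on $G$: $x\leqslant y$ iff $x\curlywedge y=x$ (this is the semilattice order, denoted $\zeta$); $x\downarrow y$ iff $(x,y)\in\xi$; $x\vdash y$ iff $(x,y)\in\delta$. $G^*=G\cup\{e\}$ is the semigroup obtained from $(G,\cdot)$ by adjoining a new identity element $e\notin G$, and one sets by convention $e\leqslant e$, $e\vdash e$, and $x\vdash e$ for all $x\in G$. The formula $a\boxdot b\leqslant c$ abbreviates $a\vdash b\wedge ab\leqslant c$. A subset $H\subseteq G$ is called $f_\xi$-closed if for all $x,y,t\in G^*$ and $z,u,v\in G$: if $u\downarrow v$, $(u\curlywedge v)x\boxdot y\leqslant zt$, $u\in H$ and $vx\in H$, then $z\in H$. For $X\subseteq G$, $f_\xi(X)$ denotes the least $f_\xi$-closed subset of $G$ containing $X$ (the intersection of all $f_\xi$-closed subsets containing $X$). Transformations: for a nonempty set $A$, a transformation of $A$ is a partial map $A\to A$, regarded as a subset of $A\times A$; $\mathrm{pr}_1 f$ is its domain and $\mathrm{pr}_2 f$ its image. For transformations $f,g$, the product $f\cdot g$ is the composite ''first $f$, then $g$'': $(f\cdot g)(a)=g(f(a))$, defined exactly when $a\in\mathrm{pr}_1 f$ and $f(a)\in\mathrm{pr}_1 g$. A transformative $\cap$-semigroup of transformations is a system $(\Phi,\cdot,\cap,\xi_\Phi,\delta_\Phi)$ where $\Phi$ is a set of transformations of some nonempty set $A$ closed under this product and under set-theoretic intersection of subsets of $A\times A$, $\xi_\Phi=\{(f,g)\in\Phi^2: f$ and $g$ coincide on $\mathrm{pr}_1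 f\cap\mathrm{pr}_1 g\}$ (the semicompatibility relation; i.e. $f$ restricted to $\mathrm{pr}_1 g$ equals $g$ restricted to $\mathrm{pr}_1 f$), and $\delta_\Phi=\{(f,g)\in\Phi^2:\mathrm{pr}_2 f\subseteq\mathrm{pr}_1 g\}$ (the semiadjacency relation). An isomorphism preserves $\cdot$, $\curlywedge\mapsto\cap$, and the two relations in both directions. *)

(** * Transformations of a set A: partial maps A -> A seen as subsets of A x A *)
Definition transf (A : Type) := A -> A -> Prop.

Definition functional {A : Type} (f : transf A) : Prop :=
  forall a b c, f a b -> f a c -> b = c.

Definition pr1 {A : Type} (f : transf A) (a : A) : Prop := exists b, f a b.
Definition pr2 {A : Type} (f : transf A) (b : A) : Prop := exists a, f a b.

Definition tcomp {A : Type} (f g : transf A) : transf A :=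
  fun a c => exists b, f a b /\ g b c.

Definition tinter {A : Type} (f g : transf A) : transf A :=
  fun a b => f a b /\ g a b.

Definition semicompat {A : Type} (f g : transf A) : Prop :=
  forall a b, (f a b /\ pr1 g a) <-> (g a b /\ pr1 f a).

Definition semiadj {A : Type} (f g : transf A) : Prop :=
  forall b, pr2 f b -> pr1 g b.

Definition transformative_cap_semigroup {A : Type} (Phi : transf A -> Prop) : Prop :=
  (forall f, Phi f -> functional f) /\
  (forall f g, Phi f -> Phi g -> Phi (tcomp f g)) /\
  (forall f g, Phi f -> Phi g -> Phi (tinter f g)).

Definition iso_onto {G A : Type} (mul meet : G -> G -> G) (xi delta : G -> G -> Prop)
  (Phi : transf A -> Prop) (h : G -> transf A) : Prop :=
  (forall x, Phi (h x)) /\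
  (forall f, Phi f -> exists x, h x = f) /\
  (forall x y, h x = h y -> x = y) /\
  (forall x y, h (mul x y) = tcomp (h x) (h y)) /\
  (forall x y, h (meet x y) = tinter (h x) (h y)) /\
  (forall x y, xi x y <-> semicompat (h x) (h y)) /\
  (forall x y, delta x y <-> semiadj (h x) (h y)).

Definition representable {G : Type} (mul meet : G -> G -> G) (xi delta : G -> G -> Prop) : Prop :=
  exists (A : Type) (Phi : transf A -> Prop) (h : G -> transf A),
    inhabited A /\ transformative_cap_semigroup Phi /\ iso_onto mul meet xi delta Phi h.

Definition sleq {G : Type} (meet : G -> G -> G) (x y : G) : Prop := meet x y = x.

(** G^* = G + {e}, with e represented by None; right multiplication by an
    element of G^* (e acts as identity). *)
Definition omul {G : Type} (mul : G -> G -> G) (a : G) (x : option G) : G :=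
  match x with None => a | Some x' => mul a x' end.

(** a |- b for a in G, b in G^*, with the convention a |- e *)
Definition odelta {G : Type} (delta : G -> G -> Prop) (a : G) (b : option G) : Prop :=
  match b with None => True | Some b' => delta a b' end.

Definition boxleq {G : Type} (mul meet : G -> G -> G) (delta : G -> G -> Prop)
  (a : G) (b : option G) (c : G) : Prop :=
  odelta delta a b /\ sleq meet (omul mul a b) c.

Definition fxi_closed {G : Type} (mul meet : G -> G -> G) (xi delta : G -> G -> Prop)
  (H : G -> Prop) : Prop :=
  forall (x y t : option G) (z u v : G),
    xi u v ->
    boxleq mul meet delta (omul mul (meet u v) x) y (omul mul z t) ->
    H u -> H (omul mul v x) -> H z.

Definition fxi {G : Type} (mul meet : G -> G -> G) (xi delta : G -> G -> Prop)
  (X : G -> Prop) : G -> Prop :=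
  fun g => forall H : G -> Prop, fxi_closed mul meet xi delta H ->
             (forall w, X w -> H w) -> H g.

From Stdlib Require Import FunctionalExtensionality PropExtensionality.

(* Necessity: each condition is a property of partial maps under composition
   and intersection; for (4), the elements g whose domain contains a fixed
   point a form an f_xi-closed set, so f_xi(X) only contains maps defined
   wherever all maps of X are.

   Sufficiency: let G act on the points (H, [g]), where H is an f_xi-closed set
   and [g] is a class of the congruence g ~ g' iff g meet g' is in H on
   H together with the adjoined identity e; x sends (H, [g]) to (H, [gx])
   whenever gx is in H.  Closedness of H is exactly what makes this action
   well defined and compatible with the operations, and the point
   (f_xi(X), [e]) separates the elements as required by (4). *)

Section Transformations.
Variable A : Type.
Implicit Types f g k : transf A.

Lemma transf_ext f g : (forall a b, f a b <-> g a b) -> f = g.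
Proof.
  intros E. apply functional_extensionality; intros a.
  apply functional_extensionality; intros b. apply propositional_extensionality, E.
Qed.

Lemma semicompat_iff f g : functional f -> functional g ->
  semicompat f g <-> (forall a b c, f a b -> g a c -> b = c).
Proof.
  intros Ff Fg; split.
  - intros S a b c fab gac. apply (Fg a b c); [|exact gac].
    apply (S a b). split; [exact fab | exists c; exact gac].
  - intros E a b; split.
    + intros [fab [c gac]]. destruct (E a b c fab gac).
      split; [exact gac | exists b; exact fab].
    + intros [gab [c fac]]. destruct (E a c b fac gab).
      split; [exact fac | exists c; exact gab].
Qed.

Lemma tcomp_tinter_l f g k : functional f ->
  tcomp f (tinter g k) = tinter (tcomp f g) (tcomp f k).
Proof.
  intros Ff. apply transf_ext; intros a c; split.
  - intros [b [fab [gbc kbc]]]. split; exists b; auto.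
  - intros [[b [fab gbc]] [b' [fab' kbc]]]. rewrite <- (Ff a b b' fab fab') in kbc.
    exists b. repeat split; assumption.
Qed.

Lemma tcomp_tinter_r f g k : semicompat f g ->
  tcomp (tinter f g) k = tinter (tcomp f k) (tcomp g k).
Proof.
  intros S. apply transf_ext; intros a c; split.
  - intros [b [[fab gab] kbc]]. split; exists b; auto.
  - intros [[b [fab kbc]] [b' [gab' _]]].
    destruct (proj1 (S a b) (conj fab (ex_intro _ b' gab'))) as [gab _].
    exists b. repeat split; assumption.
Qed.

End Transformations.

Lemma fxi_closed_fxi {G : Type} (mul meet : G -> G -> G) (xi delta : G -> G -> Prop) X :
  fxi_closed mul meet xi delta (fxi mul meet xi delta X).
Proof.
  intros x y t z u v huv hle hu hv H HC HX.
  exact (HC x y t z u v huv hle (hu H HC HX) (hv H HC HX)).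
Qed.

Lemma fxi_incl {G : Type} (mul meet : G -> G -> G) (xi delta : G -> G -> Prop) X w :
  X w -> fxi mul meet xi delta X w.
Proof. intros hw H _ HX. exact (HX w hw). Qed.

Section Necessity.
Variables (G A : Type) (mul meet : G -> G -> G) (xi delta : G -> G -> Prop).
Variable h : G -> transf A.
Hypothesis h_functional : forall x, functional (h x).
Hypothesis h_inj : forall x y, h x = h y -> x = y.
Hypothesis h_mul : forall x y, h (mul x y) = tcomp (h x) (h y).
Hypothesis h_meet : forall x y, h (meet x y) = tinter (h x) (h y).
Hypothesis h_xi : forall x y, xi x y <-> semicompat (h x) (h y).
Hypothesis h_delta : forall x y, delta x y <-> semiadj (h x) (h y).

Lemma h_le x y a b : sleq meet x y -> h x a b -> h y a b.
Proof. intros E hx. rewrite <- E, h_meet in hx. apply hx. Qed.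

Lemma pr1_h_omul z t a : pr1 (h (omul mul z t)) a -> pr1 (h z) a.
Proof.
  destruct t as [t|]; simpl; [|trivial].
  rewrite h_mul. intros [c [b [hz _]]]. exists b; exact hz.
Qed.

Lemma pr1_h_closed a : fxi_closed mul meet xi delta (fun g => pr1 (h g) a).
Proof.
  intros x y t z u v huv [hd hle] [b hu] hv.
  apply h_xi in huv.
  assert (hm : pr1 (h (omul mul (meet u v) x)) a).
  { destruct x as [x|]; simpl in *.
    - rewrite h_mul in hv |- *. destruct hv as [c [b' [hv hx]]].
      assert (hv' : h v a b) by (apply (huv a b); split; [exact hu | exists b'; exact hv]).
      rewrite <- (h_functional v a b b' hv' hv) in hx.
      exists c, b. rewrite h_meet. repeat split; assumption.
    - assert (hv' : h v a b) by (apply (huv a b); split; [exact hu | exact hv]).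
      exists b. rewrite h_meet. split; assumption. }
  apply (pr1_h_omul z t).
  destruct y as [y|]; simpl in *; destruct hm as [b1 hm].
  - apply h_delta in hd. destruct (hd b1 (ex_intro _ a hm)) as [c hc].
    exists c. apply (h_le _ _ _ _ hle). rewrite h_mul. exists b1; split; assumption.
  - exists b1. exact (h_le _ _ _ _ hle hm).
Qed.

Lemma pr1_h_fxi X w a : fxi mul meet xi delta X w ->
  (forall v, X v -> pr1 (h v) a) -> pr1 (h w) a.
Proof. intros F HX. exact (F _ (pr1_h_closed a) HX). Qed.

Lemma xi_mull_of_iso x u v : xi u v -> xi (mul x u) (mul x v).
Proof.
  rewrite !h_xi, !semicompat_iff, !h_mul by apply h_functional.
  intros E a c c' [b [xab ubc]] [b' [xab' vbc']].
  rewrite <- (h_functional x a b b' xab xab') in vbc'. exact (E b c c' ubc vbc').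
Qed.

Lemma le_xi_of_iso x y : sleq meet x y -> xi x y.
Proof.
  rewrite h_xi, semicompat_iff by apply h_functional.
  intros hle a b c xab yac. exact (h_functional y a b c (h_le x y a b hle xab) yac).
Qed.

Lemma delta_mull_of_iso x y u : delta x y -> delta (mul u x) y.
Proof.
  rewrite !h_delta, h_mul. intros S c [a [b [_ xbc]]]. apply S. exists b; exact xbc.
Qed.

Lemma mul_meetr_of_iso x y z : mul x (meet y z) = meet (mul x y) (mul x z).
Proof.
  apply h_inj. rewrite h_mul, !h_meet, !h_mul. apply tcomp_tinter_l, h_functional.
Qed.

Lemma xi_down_of_iso x y u v :
  sleq meet x y -> sleq meet u v -> xi y v -> xi u x.
Proof.
  intros hxy huv. rewrite !h_xi, !semicompat_iff by apply h_functional.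
  intros E a b c uab xac. symmetry. exact (E a c b (h_le x y a c hxy xac) (h_le u v a b huv uab)).
Qed.

Lemma mul_meetl_of_iso x y u : xi x y -> mul (meet x y) u = meet (mul x u) (mul y u).
Proof.
  intros hxy. apply h_inj. rewrite h_mul, !h_meet, !h_mul.
  apply tcomp_tinter_r, h_xi, hxy.
Qed.

Lemma fxi_meet_le_of_iso x y :
  fxi mul meet xi delta (fun w => w = x) (meet x y) -> sleq meet x y.
Proof.
  intros F. apply h_inj. rewrite h_meet. apply transf_ext; intros a b; split.
  - intros [xab _]; exact xab.
  - intros xab.
    destruct (pr1_h_fxi _ _ a F) as [c hc]; [intros v ->; exists b; exact xab|].
    rewrite h_meet in hc. destruct hc as [xac yac].
    rewrite <- (h_functional x a b c xab xac) in yac. split; assumption.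
Qed.

Lemma fxi_meet_xi_of_iso x y :
  fxi mul meet xi delta (fun w => w = x \/ w = y) (meet x y) -> xi x y.
Proof.
  intros F. rewrite h_xi, semicompat_iff by apply h_functional.
  intros a b c xab yac.
  destruct (pr1_h_fxi _ _ a F) as [d hd]; [intros v [-> | ->]; eexists; eassumption|].
  rewrite h_meet in hd. destruct hd as [xad yad].
  rewrite (h_functional x a b d xab xad). exact (h_functional y a d c yad yac).
Qed.

Lemma fxi_mul_delta_of_iso x y :
  fxi mul meet xi delta (fun w => w = x) (mul x y) -> delta x y.
Proof.
  intros F. apply h_delta. intros b [a xab].
  destruct (pr1_h_fxi _ _ a F) as [c hc]; [intros v ->; exists b; exact xab|].
  rewrite h_mul in hc. destruct hc as [b' [xab' ybc]].
  rewrite <- (h_functional x a b b' xab xab') in ybc. exists c; exact ybc.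
Qed.

End Necessity.

Section Sufficiency.
Variables (G : Type) (mul meet : G -> G -> G) (xi delta : G -> G -> Prop).
Hypothesis mul_assoc : forall x y z, mul x (mul y z) = mul (mul x y) z.
Hypothesis meet_assoc : forall x y z, meet x (meet y z) = meet (meet x y) z.
Hypothesis meet_comm : forall x y, meet x y = meet y x.
Hypothesis meet_idem : forall x, meet x x = x.
Hypothesis xi_mull : forall x u v, xi u v -> xi (mul x u) (mul x v).
Hypothesis le_xi : forall x y, sleq meet x y -> xi x y.
Hypothesis delta_mull : forall x y u, delta x y -> delta (mul u x) y.
Hypothesis mul_meetr : forall x y z, mul x (meet y z) = meet (mul x y) (mul x z).
Hypothesis xi_down : forall x y u v, sleq meet x y -> sleq meet u v -> xi y v -> xi u x.
Hypothesis mul_meetl : forall x y u, xi x y -> mul (meet x y) u = meet (mul x u) (mul y u).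

Local Notation closed := (fxi_closed mul meet xi delta).

Lemma le_refl a : sleq meet a a.
Proof. apply meet_idem. Qed.

Lemma meet_le_l a b : sleq meet (meet a b) a.
Proof. unfold sleq. rewrite (meet_comm (meet a b) a), meet_assoc, meet_idem. reflexivity. Qed.

Lemma meet_le_r a b : sleq meet (meet a b) b.
Proof. unfold sleq. rewrite <- meet_assoc, meet_idem. reflexivity. Qed.

Lemma le_trans a b c : sleq meet a b -> sleq meet b c -> sleq meet a c.
Proof. unfold sleq; intros hab hbc. rewrite <- hab, <- meet_assoc, hbc. reflexivity. Qed.

Lemma le_meet a b c : sleq meet c a -> sleq meet c b -> sleq meet c (meet a b).
Proof. unfold sleq; intros hca hcb. rewrite meet_assoc, hca, hcb. reflexivity. Qed.

Lemma le_mulr a b x : sleq meet a b -> sleq meet (mul a x) (mul b x).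
Proof.
  intros hab. unfold sleq. rewrite <- (mul_meetl a b x (le_xi a b hab)), hab. reflexivity.
Qed.

Lemma xi_refl u : xi u u.
Proof. apply le_xi, le_refl. Qed.

Section ClosedSet.
Variable H : G -> Prop.
Hypothesis HC : closed H.

Lemma closed_up w z : H w -> sleq meet w z -> H z.
Proof.
  intros hw hle. apply (HC None None None z w w (xi_refl w)); [|exact hw|exact hw].
  split; [exact I|]. simpl. rewrite meet_idem. exact hle.
Qed.

Lemma closed_prefix z t : H (mul z t) -> H z.
Proof.
  intros hzt. apply (HC None None (Some t) z (mul z t) (mul z t) (xi_refl _));
    [|exact hzt|exact hzt].
  split; [exact I|]. simpl. rewrite meet_idem. apply le_refl.
Qed.

Lemma closed_meet u v : xi u v -> H u -> H v -> H (meet u v).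
Proof.
  intros huv hu hv. apply (HC None None None (meet u v) u v huv); [|exact hu|exact hv].
  split; [exact I | apply le_refl].
Qed.

Lemma closed_meet_mulr u v x : sleq meet u v -> H u -> H (mul v x) -> H (mul u x).
Proof.
  intros huv hu hvx. apply (HC (Some x) None None (mul u x) u v (le_xi u v huv));
    [|exact hu|exact hvx].
  split; [exact I|]. simpl. rewrite huv. apply le_refl.
Qed.

Lemma closed_delta u y : delta u y -> H u -> H (mul u y).
Proof.
  intros huy hu. apply (HC None (Some y) None (mul u y) u u (xi_refl u));
    [|exact hu|exact hu].
  simpl. rewrite meet_idem. split; [exact huy | apply le_refl].
Qed.

Lemma closed_meet_trans a b c : H (meet a b) -> H (meet b c) -> H (meet a c).
Proof.
  intros hab hbc.
  assert (hxi : xi (meet a b) (meet b c))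
    by exact (xi_down _ b _ b (meet_le_l b c) (meet_le_r a b) (xi_refl b)).
  apply (closed_up _ _ (closed_meet _ _ hxi hab hbc)).
  apply le_meet.
  - apply (le_trans _ (meet a b)); apply meet_le_l.
  - apply (le_trans _ (meet b c)); apply meet_le_r.
Qed.

End ClosedSet.

Definition in_star (H : G -> Prop) (g : option G) : Prop :=
  match g with None => True | Some a => H a end.

Definition congr (H : G -> Prop) (g g' : option G) : Prop :=
  match g, g' with
  | None, None => True
  | Some a, Some b => H (meet a b)
  | _, _ => False
  end.

Definition cls (H : G -> Prop) (g : option G) : option G -> Prop :=
  fun k => in_star H k /\ congr H k g.

Definition lmul (g : option G) (x : G) : G :=
  match g with None => x | Some a => mul a x end.

Lemma lmul_mul g x y : lmul g (mul x y) = mul (lmul g x) y.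
Proof. destruct g; simpl; auto. Qed.

Lemma lmul_meet g x y : lmul g (meet x y) = meet (lmul g x) (lmul g y).
Proof. destruct g; simpl; auto. Qed.

Lemma xi_lmul g x y : xi x y -> xi (lmul g x) (lmul g y).
Proof. destruct g; simpl; auto. Qed.

Lemma delta_lmul g x y : delta x y -> delta (lmul g x) y.
Proof. destruct g; simpl; auto. Qed.

Section Congruence.
Variable H : G -> Prop.
Hypothesis HC : closed H.

Lemma congr_refl k : in_star H k -> congr H k k.
Proof. destruct k; simpl; auto. rewrite meet_idem. auto. Qed.

Lemma congr_sym k k' : congr H k k' -> congr H k' k.
Proof. destruct k, k'; simpl; auto. rewrite meet_comm. auto. Qed.

Lemma congr_trans k1 k2 k3 : congr H k1 k2 -> congr H k2 k3 -> congr H k1 k3.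
Proof. destruct k1, k2, k3; simpl; try tauto. apply closed_meet_trans; exact HC. Qed.

Lemma congr_of_cls k k' : in_star H k -> cls H k = cls H k' -> congr H k k'.
Proof.
  intros hk E. assert (hkk : cls H k k) by (split; [exact hk | apply congr_refl, hk]).
  rewrite E in hkk. apply hkk.
Qed.

Lemma cls_of_congr k k' : congr H k k' -> cls H k = cls H k'.
Proof.
  intros E. apply functional_extensionality; intros k0.
  apply propositional_extensionality. unfold cls; split; intros [hk0 E0]; split; auto.
  - exact (congr_trans _ _ _ E0 E).
  - exact (congr_trans _ _ _ E0 (congr_sym _ _ E)).
Qed.

Lemma cls_meet_l a b : H (meet a b) -> cls H (Some (meet a b)) = cls H (Some a).
Proof. intros hab. apply cls_of_congr. simpl. rewrite meet_le_l. exact hab. Qed.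

Lemma cls_meet_r a b : H (meet a b) -> cls H (Some (meet a b)) = cls H (Some b).
Proof. intros hab. apply cls_of_congr. simpl. rewrite meet_le_r. exact hab. Qed.

Lemma congr_lmul g g' x : congr H g g' -> H (lmul g x) ->
  H (lmul g' x) /\ congr H (Some (lmul g x)) (Some (lmul g' x)).
Proof.
  destruct g as [a|], g' as [b|]; simpl; intros E hx; try contradiction.
  - assert (habx : H (mul (meet a b) x)) by exact (closed_meet_mulr H HC _ _ x (meet_le_l a b) E hx).
    split.
    + apply (closed_up H HC _ _ habx), le_mulr, meet_le_r.
    + apply (closed_up H HC _ _ habx), le_meet; apply le_mulr; [apply meet_le_l | apply meet_le_r].
  - split; [exact hx | apply (congr_refl (Some x)), hx].
Qed.

End Congruence.

Definition Point := ((G -> Prop) * (option G -> Prop))%type.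

Definition rep (x : G) : transf Point := fun p q =>
  exists H g, closed H /\ in_star H g /\ H (lmul g x) /\
    p = (H, cls H g) /\ q = (H, cls H (Some (lmul g x))).

Lemma rep_cls x H g q : in_star H g ->
  rep x (H, cls H g) q <-> closed H /\ H (lmul g x) /\ q = (H, cls H (Some (lmul g x))).
Proof.
  intros hg; split.
  - intros (H' & g' & HC & hg' & hx & ep & ->). injection ep as <- ecls.
    apply (congr_of_cls H g g' hg) in ecls.
    destruct (congr_lmul H HC g' g x (congr_sym H g g' ecls) hx) as [hx' E].
    repeat split; [exact HC | exact hx' |]. f_equal. exact (cls_of_congr H HC _ _ E).
  - intros (HC & hx & ->). exists H, g. repeat split; assumption.
Qed.

Lemma rep_dom {x p q} : rep x p q -> exists H g, in_star H g /\ p = (H, cls H g).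
Proof. intros (H & g & _ & hg & _ & ep & _). exists H, g. split; assumption. Qed.

Lemma rep_functional x : functional (rep x).
Proof.
  intros p q q' hq hq'. destruct (rep_dom hq) as (H & g & hg & ->).
  apply rep_cls in hq as (_ & _ & ->), hq' as (_ & _ & ->); auto.
Qed.

Lemma rep_mul x y : rep (mul x y) = tcomp (rep x) (rep y).
Proof.
  apply transf_ext; intros p r; split.
  - intros hr. destruct (rep_dom hr) as (H & g & hg & ->).
    apply rep_cls in hr as (HC & hxy & ->); [|exact hg]. rewrite lmul_mul in hxy |- *.
    exists (H, cls H (Some (lmul g x))). split.
    + apply rep_cls; [exact hg|]. repeat split; [exact HC | apply (closed_prefix H HC _ y hxy)].
    + apply rep_cls; [apply (closed_prefix H HC _ y hxy)|]. repeat split; assumption.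
  - intros [q [hq hr]]. destruct (rep_dom hq) as (H & g & hg & ->).
    apply rep_cls in hq as (HC & hx & ->); [|exact hg].
    apply rep_cls in hr as (_ & hxy & ->); [|exact hx].
    apply rep_cls; [exact hg|]. rewrite lmul_mul. repeat split; assumption.
Qed.

Lemma rep_meet x y : rep (meet x y) = tinter (rep x) (rep y).
Proof.
  apply transf_ext; intros p r; split.
  - intros hr. destruct (rep_dom hr) as (H & g & hg & ->).
    apply rep_cls in hr as (HC & hxy & ->); [|exact hg]. rewrite lmul_meet in hxy |- *.
    assert (hx : H (lmul g x)) by apply (closed_up H HC _ _ hxy), meet_le_l.
    assert (hy : H (lmul g y)) by apply (closed_up H HC _ _ hxy), meet_le_r.
    split; apply rep_cls; try exact hg; repeat split; try assumption.
    + rewrite cls_meet_l; [reflexivity | exact HC | exact hxy].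
    + rewrite cls_meet_r; [reflexivity | exact HC | exact hxy].
  - intros [hrx hry]. destruct (rep_dom hrx) as (H & g & hg & ->).
    apply rep_cls in hrx as (HC & hx & ->), hry as (_ & _ & E); [|exact hg|exact hg].
    injection E as E. apply (congr_of_cls H (Some _) _ hx) in E. simpl in E.
    apply rep_cls; [exact hg|]. rewrite lmul_meet, cls_meet_l; auto.
Qed.

Lemma rep_semicompat x y : xi x y -> semicompat (rep x) (rep y).
Proof.
  rewrite semicompat_iff by apply rep_functional.
  intros hxy p q q' hq hq'. destruct (rep_dom hq) as (H & g & hg & ->).
  apply rep_cls in hq as (HC & hx & ->), hq' as (_ & hy & ->); auto.
  f_equal. apply cls_of_congr; [exact HC|]. simpl.
  apply (closed_meet H HC); [apply xi_lmul, hxy | exact hx | exact hy].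
Qed.

Lemma rep_semiadj x y : delta x y -> semiadj (rep x) (rep y).
Proof.
  intros hd q [p hp]. destruct (rep_dom hp) as (H & g & hg & ->).
  apply rep_cls in hp as (HC & hx & ->); [|exact hg].
  exists (H, cls H (Some (mul (lmul g x) y))). apply rep_cls; [exact hx|].
  repeat split; [exact HC|]. apply (closed_delta H HC); [apply delta_lmul, hd | exact hx].
Qed.

Hypothesis fxi_meet_le :
  forall x y, fxi mul meet xi delta (fun w => w = x) (meet x y) -> sleq meet x y.
Hypothesis fxi_meet_xi :
  forall x y, fxi mul meet xi delta (fun w => w = x \/ w = y) (meet x y) -> xi x y.
Hypothesis fxi_mul_delta :
  forall x y, fxi mul meet xi delta (fun w => w = x) (mul x y) -> delta x y.

Lemma rep_unit H x : closed H -> H x -> rep x (H, cls H None) (H, cls H (Some x)).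
Proof. intros HC hx. apply (rep_cls x H None); [exact I|]. repeat split; assumption. Qed.

Lemma le_of_rep_eq x y : rep x = rep y -> sleq meet x y.
Proof.
  intros E. set (H := fxi mul meet xi delta (fun w => w = x)).
  assert (HC : closed H) by apply fxi_closed_fxi.
  assert (hx : H x) by (apply fxi_incl; reflexivity).
  pose proof (rep_unit H x HC hx) as hp. rewrite E in hp.
  apply (rep_cls y H None) in hp as (_ & _ & ep); [|exact I]. injection ep as ep.
  apply fxi_meet_le. exact (congr_of_cls H (Some x) (Some y) hx ep).
Qed.

Lemma xi_of_semicompat x y : semicompat (rep x) (rep y) -> xi x y.
Proof.
  rewrite semicompat_iff by apply rep_functional. intros E.
  set (H := fxi mul meet xi delta (fun w => w = x \/ w = y)).
  assert (HC : closed H) by apply fxi_closed_fxi.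
  assert (hx : H x) by (apply fxi_incl; left; reflexivity).
  assert (hy : H y) by (apply fxi_incl; right; reflexivity).
  pose proof (E _ _ _ (rep_unit H x HC hx) (rep_unit H y HC hy)) as ep. injection ep as ep.
  apply fxi_meet_xi. exact (congr_of_cls H (Some x) (Some y) hx ep).
Qed.

Lemma delta_of_semiadj x y : semiadj (rep x) (rep y) -> delta x y.
Proof.
  intros S. set (H := fxi mul meet xi delta (fun w => w = x)).
  assert (HC : closed H) by apply fxi_closed_fxi.
  assert (hx : H x) by (apply fxi_incl; reflexivity).
  destruct (S (H, cls H (Some x)) (ex_intro _ (H, cls H None) (rep_unit H x HC hx))) as [r hr].
  apply (rep_cls y H (Some x)) in hr as (_ & hxy & _); [|exact hx].
  apply fxi_mul_delta. exact hxy.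
Qed.

Lemma representable_of_conditions : representable mul meet xi delta.
Proof.
  exists Point, (fun f => exists x, rep x = f), rep.
  split; [exact (inhabits (fun _ => True, fun _ => True))|]. split.
  - split; [intros f [x <-]; apply rep_functional|]. split.
    + intros f k [x <-] [y <-]. exists (mul x y). apply rep_mul.
    + intros f k [x <-] [y <-]. exists (meet x y). apply rep_meet.
  - split; [intros x; exists x; reflexivity|].
    split; [intros f [x <-]; exists x; reflexivity|].
    split.
    { intros x y E. pose proof (le_of_rep_eq x y E) as hxy.
      pose proof (le_of_rep_eq y x (eq_sym E)) as hyx.
      unfold sleq in *. rewrite <- hxy, meet_comm. exact hyx. }
    split; [apply rep_mul|]. split; [apply rep_meet|].
    split; intros x y; split.
    + apply rep_semicompat.
    + apply xi_of_semicompat.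
    + apply rep_semiadj.
    + apply delta_of_semiadj.
Qed.

End Sufficiency.

Theorem theorem1 (G : Type) (mul meet : G -> G -> G) (xi delta : G -> G -> Prop)
  (mul_assoc : forall x y z, mul x (mul y z) = mul (mul x y) z)
  (meet_assoc : forall x y z, meet x (meet y z) = meet (meet x y) z)
  (meet_comm : forall x y, meet x y = meet y x)
  (meet_idem : forall x, meet x x = x) :
  representable mul meet xi delta <->
  ( (* (1) *)
    (forall x u v, xi u v -> xi (mul x u) (mul x v)) /\
    (forall x y, sleq meet x y -> xi x y) /\
    (* (2) *)
    (forall x y u, delta x y -> delta (mul u x) y) /\
    (* (3) *)
    (forall x y z, mul x (meet y z) = meet (mul x y) (mul x z)) /\
    (forall x y u v, sleq meet x y -> sleq meet u v -> xi y v -> xi u x) /\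
    (forall x y u, xi x y -> mul (meet x y) u = meet (mul x u) (mul y u)) /\
    (* (4) *)
    (forall x y, fxi mul meet xi delta (fun w => w = x) (meet x y) -> sleq meet x y) /\
    (forall x y, fxi mul meet xi delta (fun w => w = x \/ w = y) (meet x y) -> xi x y) /\
    (forall x y, fxi mul meet xi delta (fun w => w = x) (mul x y) -> delta x y) ).
Proof.
  split.
  - intros (A & Phi & h & _ & (Phi_functional & _ & _) & in_Phi & _ & h_inj & h_mul & h_meet
            & h_xi & h_delta).
    assert (h_functional : forall x, functional (h x)) by (intros x; apply Phi_functional, in_Phi).
    repeat split;
      [ eapply xi_mull_of_iso | eapply le_xi_of_iso | eapply delta_mull_of_iso
      | eapply mul_meetr_of_iso | eapply xi_down_of_iso | eapply mul_meetl_of_iso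
      | eapply fxi_meet_le_of_iso | eapply fxi_meet_xi_of_iso | eapply fxi_mul_delta_of_iso ];
      eassumption.
  - intros conditions. decompose [and] conditions.
    eapply representable_of_conditions; eassumption.
Qed.
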